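(* The sequent $\cdot;\cdot\Rightarrow\bot$ (empty context, no hypotheses, conclusion $\bot$) is not derivable in the sequent calculus $NL^{\Rightarrow}$.
   Context: Types are $\tau ::= \delta \mid \nu \mid \langle\nu\rangle\tau$, with $\delta$ ranging over data types and $\nu$ over name types. Terms are $t ::= x \mid \mathsf{a} \mid c \mid f(t_1,\dots,t_n)$, where $x$ ranges over a countably infinite set of variables and $\mathsf a,\mathsf b,\dots$ over a disjoint countably infinite set of name-symbols. The signature assigns $c:\delta$, $f:\tau_1,\dots,\tau_n\to\delta$, $p:\tau_1,\dots,\tau_n\to o$, and contains for all name types $\nu$ and types $\tau$ the symbols $swap:\nu,\nu,\tau\to\tau$, $abs:\nu,\tau\to\langle\nu\rangle\tau$, $eq:\tau,\tau\to o$, $fresh:\nu,\tau\to o$, written $(a\;b)\cdot t$, $\langle a\rangle t$, $t\approx u$, $a\# t$. Formulas: $\top,\bot,p(\vec t),\phi\wedge\psi,\phi\vee\psi,\phi\supset\psi,\forall x{:}\tau.\phi,\exists x{:}\tau.\phi$, and $\mathsf{N}\mathsf a{:}\nu.\phi$ (the fresh-name quantifier, binding the name-symbol $\mathsf a$). Contexts are $\Sigma::=\cdot\mid\Sigma,x{:}\tau\mid\Sigma\#\mathsf a{:}\nu$ (no symbol twice); $\Sigma\#\mathsf a{:}\nu$ records that $\mathsf a$ has type $\nu$ and is fresh for everything in $\Sigma$. Typing is the standard many-sorted one ($\Sigma\vdash\mathsf N\mathsf a{:}\nu.\phi:o$ iff $\Sigma\#\mathsf a{:}\nu\vdash\phi:o$).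 $Tm_\Sigma$ is the set of terms well-typed in $\Sigma$; $|\cdot|=\emptyset$, $|\Sigma,x{:}\tau|=|\Sigma|$, $|\Sigma\#\mathsf a{:}\nu|=|\Sigma|\cup\{\mathsf a\#t\mid t\in Tm_\Sigma\}$. $NL^{\Rightarrow}$ derives sequents $\Sigma;\Gamma\Rightarrow\Delta$ ($\Gamma,\Delta$ finite multisets of formulas well-formed in $\Sigma$) by: (i) the classical G3c rules: initial sequents $\Sigma;\Gamma,P\Rightarrow P,\Delta$ for atomic $P$, $\Sigma;\Gamma\Rightarrow\top,\Delta$, $\Sigma;\Gamma,\bot\Rightarrow\Delta$, and the standard context-sharing left/right rules for $\wedge,\vee,\supset,\forall,\exists$ ($\forall R$, $\exists L$ add a fresh eigenvariable $x{:}\sigma$ to $\Sigma$; $\forall L$ from $\Sigma;\Gamma,\forall x{:}\sigma.\phi,\phi[t/x]\Rightarrow\Delta$ and $\exists R$ from $\Sigma;\Gamma\Rightarrow\exists x{:}\sigma.\phi,\phi[t/x],\Delta$ with $\Sigma\vdash t:\sigma$); (ii) $\mathsf N R$: from $\Sigma\#\mathsf a{:}\nu;\Gamma\Rightarrow\phi,\Delta$ infer $\Sigma;\Gamma\Rightarrow\mathsf N\mathsf a{:}\nu.\phi,\Delta$, and $\mathsf N L$: from $\Sigma\#\mathsf a{:}\nu;\Gamma,\phi\Rightarrow\Delta$ infer $\Sigma;\Gamma,\mathsf N\mathsf a{:}\nu.\phi\Rightarrow\Delta$ (both with $\mathsf a\notin\Sigma$); (iii) nonlogical rules: $\approx R$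 (from $\Sigma;\Gamma,t\approx t\Rightarrow\Delta$ infer $\Sigma;\Gamma\Rightarrow\Delta$); $\approx S$ (from $\Sigma;\Gamma,t\approx u,P(t),P(u)\Rightarrow\Delta$ infer $\Sigma;\Gamma,t\approx u,P(t)\Rightarrow\Delta$, $P$ atomic); for each instance $P_1\wedge\dots\wedge P_n\supset Q_1\vee\dots\vee Q_m$ ($m\ge 0$) of the schemes (S1) $(a\;a)\cdot x\approx x$, (S2) $(a\;b)\cdot(a\;b)\cdot x\approx x$, (S3) $(a\;b)\cdot a\approx b$, (E1) $(a\;b)\cdot c\approx c$, (E2) $(a\;b)\cdot f(\vec t)\approx f((a\;b)\cdot\vec t)$, (E3) $p(\vec t)\supset p((a\;b)\cdot\vec t)$, (F1) $a\#x\wedge b\#x\supset(a\;b)\cdot x\approx x$, (F2) $a\#b$ for $a,b$ of distinct name types, (F3) $a\#a\supset\bot$ ($m=0$), (F4) $a\#b\vee a\approx b$, (A1) $a\#y\wedge x\approx(a\;b)\cdot y\supset\langle a\rangle x\approx\langle b\rangle y$ (with $a,b$ arbitrary well-typed terms of name type, $x,y,\vec t$ arbitrary well-typed terms), the rule: from $\Sigma;\Gamma,\vec P,Q_i\Rightarrow\Delta$ for all $i\le m$ infer $\Sigma;\Gamma,\vec P\Rightarrow\Delta$; (A2) from $\Sigma;\Gamma,E,a\approx b,t\approx u\Rightarrow\Delta$ and $\Sigma;\Gamma,E,a\#u,t\approx(a\;b)\cdot u\Rightarrow\Delta$ infer $\Sigma;\Gamma,E\Rightarrow\Delta$, where $E$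 is $\langle a\rangle t\approx\langle b\rangle u$; (A3) from $\Sigma\vdash t:\langle\nu\rangle\sigma$ and $\Sigma,a{:}\nu,x{:}\sigma;\Gamma,t\approx\langle a\rangle x\Rightarrow\Delta$ ($a,x\notin\Sigma$) infer $\Sigma;\Gamma\Rightarrow\Delta$; (F) from $\Sigma\#\mathsf a{:}\nu;\Gamma\Rightarrow\Delta$ ($\mathsf a\notin\Sigma$) infer $\Sigma;\Gamma\Rightarrow\Delta$; ($\Sigma\#$) from $\Sigma;\Gamma,\mathsf a\#t\Rightarrow\Delta$ with $\mathsf a\#t\in|\Sigma|$ infer $\Sigma;\Gamma\Rightarrow\Delta$. *)

From Stdlib Require Import List Permutation.
Import ListNotations.

Set Implicit Arguments.

Inductive ty (D N : Type) : Type :=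
| TData (d : D)
| TName (n : N)
| TAbs (n : N) (t : ty D N).

(** A signature: data types, name types, constants c:delta, function
    symbols f : tau1..taun -> delta, relation symbols p : tau1..taun -> o.
    (swap, abs, eq, fresh are built into the syntax below, at all types.) *)
Record signature := {
  dty : Type;
  nty : Type;
  cst : Type;
  fsym : Type;
  psym : Type;
  cst_ty : cst -> dty;
  fsym_ty : fsym -> list (ty dty nty) * dty;
  psym_ty : psym -> list (ty dty nty)
}.

Section NominalLogic.
Variable sg : signature.

Definition sty := ty (dty sg) (nty sg).

(** Free variables [tvar x] and name-symbols [tname a] are named by
    naturals (two disjoint name spaces); [tbvar i] / [tbname i] are de Bruijn
    indices for variables bound by forall/exists resp. name-symbols bound by
    the N-quantifier. *)
Inductive term : Type :=
| tvar (x : nat)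
| tbvar (i : nat)
| tname (a : nat)
| tbname (i : nat)
| tcst (c : cst sg)
| tapp (f : fsym sg) (ts : list term)
| tswap (a b t : term)
| tabs (a t : term).

Inductive form : Type :=
| fTop
| fBot
| fPred (p : psym sg) (ts : list term)
| fEq (t u : term)
| fFresh (a t : term)
| fAnd (A B : form)
| fOr (A B : form)
| fImp (A B : form)
| fAll (s : sty) (A : form)
| fEx (s : sty) (A : form)
| fNew (n : nty sg) (A : form).

(** Opening / substitution (the substituted terms are always locally closed). *)
Fixpoint topen_var (k : nat) (s t : term) : term :=
  match t with
  | tbvar i => if Nat.eqb i k then s else t
  | tapp f ts => tapp f (map (topen_var k s) ts)
  | tswap a b u => tswap (topen_var k s a) (topen_var k s b) (topen_var k s u)
  | tabs a u => tabs (topen_var k s a) (topen_var k s u)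
  | _ => t
  end.

Fixpoint topen_name (k : nat) (c : nat) (t : term) : term :=
  match t with
  | tbname i => if Nat.eqb i k then tname c else t
  | tapp f ts => tapp f (map (topen_name k c) ts)
  | tswap a b u => tswap (topen_name k c a) (topen_name k c b) (topen_name k c u)
  | tabs a u => tabs (topen_name k c a) (topen_name k c u)
  | _ => t
  end.

Fixpoint tsubst (z : nat) (s t : term) : term :=
  match t with
  | tvar y => if Nat.eqb y z then s else t
  | tapp f ts => tapp f (map (tsubst z s) ts)
  | tswap a b u => tswap (tsubst z s a) (tsubst z s b) (tsubst z s u)
  | tabs a u => tabs (tsubst z s a) (tsubst z s u)
  | _ => t
  end.

Fixpoint fopen_var (k : nat) (s : term) (A : form) : form :=
  match A with
  | fTop => fTop
  | fBot => fBot
  | fPred p ts => fPred p (map (topen_var k s) ts)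
  | fEq t u => fEq (topen_var k s t) (topen_var k s u)
  | fFresh a t => fFresh (topen_var k s a) (topen_var k s t)
  | fAnd B C => fAnd (fopen_var k s B) (fopen_var k s C)
  | fOr B C => fOr (fopen_var k s B) (fopen_var k s C)
  | fImp B C => fImp (fopen_var k s B) (fopen_var k s C)
  | fAll σ B => fAll σ (fopen_var (Datatypes.S k) s B)
  | fEx σ B => fEx σ (fopen_var (Datatypes.S k) s B)
  | fNew ν B => fNew ν (fopen_var k s B)
  end.

Fixpoint fopen_name (k : nat) (c : nat) (A : form) : form :=
  match A with
  | fTop => fTop
  | fBot => fBot
  | fPred p ts => fPred p (map (topen_name k c) ts)
  | fEq t u => fEq (topen_name k c t) (topen_name k c u)
  | fFresh a t => fFresh (topen_name k c a) (topen_name k c t)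
  | fAnd B C => fAnd (fopen_name k c B) (fopen_name k c C)
  | fOr B C => fOr (fopen_name k c B) (fopen_name k c C)
  | fImp B C => fImp (fopen_name k c B) (fopen_name k c C)
  | fAll σ B => fAll σ (fopen_name k c B)
  | fEx σ B => fEx σ (fopen_name k c B)
  | fNew ν B => fNew ν (fopen_name (Datatypes.S k) c B)
  end.

Definition fsubst (z : nat) (s : term) (A : form) : form :=
  match A with
  | fPred p ts => fPred p (map (tsubst z s) ts)
  | fEq t u => fEq (tsubst z s t) (tsubst z s u)
  | fFresh a t => fFresh (tsubst z s a) (tsubst z s t)
  | _ => A
  end.

Definition is_atom (A : form) : Prop :=
  match A with
  | fPred _ _ | fEq _ _ | fFresh _ _ => True
  | _ => False
  end.

(** Contexts; the head of the list is the most recently added entry.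
    [CName a nu :: Sigma] is  Sigma # a:nu. *)
Inductive centry : Type :=
| CVar (x : nat) (τ : sty)
| CName (a : nat) (ν : nty sg).

Definition ctx := list centry.

Definition var_in (x : nat) (Σ : ctx) : Prop := exists τ, In (CVar x τ) Σ.
Definition name_in (a : nat) (Σ : ctx) : Prop := exists ν, In (CName a ν) Σ.

Inductive wfctx : ctx -> Prop :=
| wfctx_nil : wfctx []
| wfctx_var x τ Σ : wfctx Σ -> ~ var_in x Σ -> wfctx (CVar x τ :: Σ)
| wfctx_name a ν Σ : wfctx Σ -> ~ name_in a Σ -> wfctx (CName a ν :: Σ).

Inductive has_type (Σ : ctx) : term -> sty -> Prop :=
| ty_var x τ : In (CVar x τ) Σ -> has_type Σ (tvar x) τ
| ty_name a ν : In (CName a ν) Σ -> has_type Σ (tname a) (TName _ ν)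
| ty_cst c : has_type Σ (tcst c) (TData _ (cst_ty sg c))
| ty_app f ts : Forall2 (has_type Σ) ts (fst (fsym_ty sg f)) ->
    has_type Σ (tapp f ts) (TData _ (snd (fsym_ty sg f)))
| ty_swap a b t ν τ : has_type Σ a (TName _ ν) -> has_type Σ b (TName _ ν) ->
    has_type Σ t τ -> has_type Σ (tswap a b t) τ
| ty_abs a t ν τ : has_type Σ a (TName _ ν) -> has_type Σ t τ ->
    has_type Σ (tabs a t) (TAbs ν τ).

Inductive wff (Σ : ctx) : form -> Prop :=
| wf_top : wff Σ fTop
| wf_bot : wff Σ fBot
| wf_pred p ts : Forall2 (has_type Σ) ts (psym_ty sg p) -> wff Σ (fPred p ts)
| wf_eq t u τ : has_type Σ t τ -> has_type Σ u τ -> wff Σ (fEq t u)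
| wf_fresh a t ν τ : has_type Σ a (TName _ ν) -> has_type Σ t τ -> wff Σ (fFresh a t)
| wf_and A B : wff Σ A -> wff Σ B -> wff Σ (fAnd A B)
| wf_or A B : wff Σ A -> wff Σ B -> wff Σ (fOr A B)
| wf_imp A B : wff Σ A -> wff Σ B -> wff Σ (fImp A B)
| wf_all σ A : (forall x, ~ var_in x Σ -> wff (CVar x σ :: Σ) (fopen_var 0 (tvar x) A)) ->
    wff Σ (fAll σ A)
| wf_ex σ A : (forall x, ~ var_in x Σ -> wff (CVar x σ :: Σ) (fopen_var 0 (tvar x) A)) ->
    wff Σ (fEx σ A)
| wf_new ν A : (forall a, ~ name_in a Σ -> wff (CName a ν :: Σ) (fopen_name 0 a A)) ->
    wff Σ (fNew ν A).

Fixpoint ctx_fresh (Σ : ctx) (A : form) : Prop :=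
  match Σ with
  | [] => False
  | CVar _ _ :: Σ' => ctx_fresh Σ' A
  | CName a _ :: Σ' =>
      ctx_fresh Σ' A \/ exists t τ, has_type Σ' t τ /\ A = fFresh (tname a) t
  end.

(** Instances  P1 /\ ... /\ Pn  ⊃  Q1 \/ ... \/ Qm  of the nominal axiom
    schemes.  E2 / E3 are taken for all function / relation symbols of the
    signature, including swap, abs, ~ and #.  Well-typedness of the
    instances is enforced by the well-formedness of the sequents in which
    they occur (see [NL]). *)
Inductive ax_inst (Σ : ctx) : list form -> list form -> Prop :=
| axS1 a x : ax_inst Σ [] [fEq (tswap a a x) x]
| axS2 a b x : ax_inst Σ [] [fEq (tswap a b (tswap a b x)) x]
| axS3 a b : ax_inst Σ [] [fEq (tswap a b a) b]
| axE1 a b c : ax_inst Σ [] [fEq (tswap a b (tcst c)) (tcst c)]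
| axE2 a b f ts :
    ax_inst Σ [] [fEq (tswap a b (tapp f ts)) (tapp f (map (tswap a b) ts))]
| axE2swap a b c d x :
    ax_inst Σ [] [fEq (tswap a b (tswap c d x))
                      (tswap (tswap a b c) (tswap a b d) (tswap a b x))]
| axE2abs a b c x :
    ax_inst Σ [] [fEq (tswap a b (tabs c x)) (tabs (tswap a b c) (tswap a b x))]
| axE3 a b p ts : ax_inst Σ [fPred p ts] [fPred p (map (tswap a b) ts)]
| axE3eq a b t u : ax_inst Σ [fEq t u] [fEq (tswap a b t) (tswap a b u)]
| axE3fresh a b c t : ax_inst Σ [fFresh c t] [fFresh (tswap a b c) (tswap a b t)]
| axF1 a b x : ax_inst Σ [fFresh a x; fFresh b x] [fEq (tswap a b x) x]
| axF2 a b ν ν' : has_type Σ a (TName _ ν) -> has_type Σ b (TName _ ν') -> ν <> ν' ->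
    ax_inst Σ [] [fFresh a b]
| axF3 a : ax_inst Σ [fFresh a a] []
| axF4 a b : ax_inst Σ [] [fFresh a b; fEq a b]
| axA1 a b x y :
    ax_inst Σ [fFresh a y; fEq x (tswap a b y)] [fEq (tabs a x) (tabs b y)].

Definition wfseq (Σ : ctx) (Γ Δ : list form) : Prop :=
  wfctx Σ /\ Forall (wff Σ) Γ /\ Forall (wff Σ) Δ.

(** Derivability in NL^=>.  Multisets are lists up to [Permutation];
    every sequent occurring in a derivation is required to be well formed. *)
Inductive NL : ctx -> list form -> list form -> Prop :=
| r_init Σ Γ Δ P : wfseq Σ Γ Δ -> is_atom P -> In P Γ -> In P Δ -> NL Σ Γ Δ
| r_topR Σ Γ Δ : wfseq Σ Γ Δ -> In fTop Δ -> NL Σ Γ Δ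
| r_botL Σ Γ Δ : wfseq Σ Γ Δ -> In fBot Γ -> NL Σ Γ Δ
| r_andL Σ Γ Γ' Δ A B : wfseq Σ Γ Δ -> Permutation Γ (fAnd A B :: Γ') ->
    NL Σ (A :: B :: Γ') Δ -> NL Σ Γ Δ
| r_andR Σ Γ Δ Δ' A B : wfseq Σ Γ Δ -> Permutation Δ (fAnd A B :: Δ') ->
    NL Σ Γ (A :: Δ') -> NL Σ Γ (B :: Δ') -> NL Σ Γ Δ
| r_orL Σ Γ Γ' Δ A B : wfseq Σ Γ Δ -> Permutation Γ (fOr A B :: Γ') ->
    NL Σ (A :: Γ') Δ -> NL Σ (B :: Γ') Δ -> NL Σ Γ Δ
| r_orR Σ Γ Δ Δ' A B : wfseq Σ Γ Δ -> Permutation Δ (fOr A B :: Δ') ->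
    NL Σ Γ (A :: B :: Δ') -> NL Σ Γ Δ
| r_impL Σ Γ Γ' Δ A B : wfseq Σ Γ Δ -> Permutation Γ (fImp A B :: Γ') ->
    NL Σ Γ' (A :: Δ) -> NL Σ (B :: Γ') Δ -> NL Σ Γ Δ
| r_impR Σ Γ Δ Δ' A B : wfseq Σ Γ Δ -> Permutation Δ (fImp A B :: Δ') ->
    NL Σ (A :: Γ) (B :: Δ') -> NL Σ Γ Δ
| r_allL Σ Γ Δ σ A t : wfseq Σ Γ Δ -> In (fAll σ A) Γ -> has_type Σ t σ ->
    NL Σ (fopen_var 0 t A :: Γ) Δ -> NL Σ Γ Δ
| r_allR Σ Γ Δ Δ' σ A x : wfseq Σ Γ Δ -> Permutation Δ (fAll σ A :: Δ') ->
    ~ var_in x Σ -> NL (CVar x σ :: Σ) Γ (fopen_var 0 (tvar x) A :: Δ') -> NL Σ Γ Δ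
| r_exL Σ Γ Γ' Δ σ A x : wfseq Σ Γ Δ -> Permutation Γ (fEx σ A :: Γ') ->
    ~ var_in x Σ -> NL (CVar x σ :: Σ) (fopen_var 0 (tvar x) A :: Γ') Δ -> NL Σ Γ Δ
| r_exR Σ Γ Δ σ A t : wfseq Σ Γ Δ -> In (fEx σ A) Δ -> has_type Σ t σ ->
    NL Σ Γ (fopen_var 0 t A :: Δ) -> NL Σ Γ Δ
| r_newR Σ Γ Δ Δ' ν A a : wfseq Σ Γ Δ -> Permutation Δ (fNew ν A :: Δ') ->
    ~ name_in a Σ -> NL (CName a ν :: Σ) Γ (fopen_name 0 a A :: Δ') -> NL Σ Γ Δ
| r_newL Σ Γ Γ' Δ ν A a : wfseq Σ Γ Δ -> Permutation Γ (fNew ν A :: Γ') ->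
    ~ name_in a Σ -> NL (CName a ν :: Σ) (fopen_name 0 a A :: Γ') Δ -> NL Σ Γ Δ
| r_eqR Σ Γ Δ t : wfseq Σ Γ Δ -> NL Σ (fEq t t :: Γ) Δ -> NL Σ Γ Δ
| r_eqS Σ Γ Γ' Δ t u A z : wfseq Σ Γ Δ -> is_atom A ->
    Permutation Γ (fEq t u :: fsubst z t A :: Γ') ->
    NL Σ (fsubst z u A :: Γ) Δ -> NL Σ Γ Δ
| r_axiom Σ Γ Γ' Δ Ps Qs : wfseq Σ Γ Δ -> ax_inst Σ Ps Qs ->
    Permutation Γ (Ps ++ Γ') ->
    (forall Q, In Q Qs -> NL Σ (Q :: Γ) Δ) -> NL Σ Γ Δ
| r_A2 Σ Γ Δ a b t u : wfseq Σ Γ Δ -> In (fEq (tabs a t) (tabs b u)) Γ ->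
    NL Σ (fEq a b :: fEq t u :: Γ) Δ ->
    NL Σ (fFresh a u :: fEq t (tswap a b u) :: Γ) Δ -> NL Σ Γ Δ
| r_A3 Σ Γ Δ t ν σ a x : wfseq Σ Γ Δ -> has_type Σ t (TAbs ν σ) ->
    ~ var_in a Σ -> ~ var_in x Σ -> a <> x ->
    NL (CVar x σ :: CVar a (TName _ ν) :: Σ) (fEq t (tabs (tvar a) (tvar x)) :: Γ) Δ ->
    NL Σ Γ Δ
| r_F Σ Γ Δ a ν : wfseq Σ Γ Δ -> ~ name_in a Σ -> NL (CName a ν :: Σ) Γ Δ -> NL Σ Γ Δ
| r_ctx Σ Γ Δ a t : wfseq Σ Γ Δ -> ctx_fresh Σ (fFresh (tname a) t) ->
    NL Σ (fFresh (tname a) t :: Γ) Δ -> NL Σ Γ Δ.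

End NominalLogic.

From Stdlib Require Import List Arith Lia Classical ClassicalEpsilon Permutation.
Import ListNotations.

(* Soundness for a single nominal model.  Each name type has countably many atoms, every
   data type denotes one point, and an abstraction <a>t denotes the locally nameless value
   obtained by closing the value of t over the atom denoted by a, so that alpha-equivalent
   abstractions are equal.  Equality is equality of values, a # t says that a denotes an
   atom outside the support of the value of t, and every predicate symbol holds.  A context
   Σ # a:ν is interpreted by valuations sending a to an atom fresh for everything Σ
   denotes, and N is read cofinitely.  Because fresh atoms always exist, every rule
   preserves validity in this model (A2 is injectivity of closing up to a fresh swap, A3 is
   opening at a fresh atom), while ⊥ is false in it. *)

Set Implicit Arguments.

Definition atom_dec {atom : Type} (c d : atom) : {c = d} + {c <> d} :=
  excluded_middle_informative _.

Ltac case_atom_dec := repeat match goal with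
  | |- context [@atom_dec ?T ?a ?b] => destruct (@atom_dec T a b); subst
  | H : context [@atom_dec ?T ?a ?b] |- _ => destruct (@atom_dec T a b); subst
  end; try congruence.

Section NominalValues.
Variable atom : Type.

(** Values in locally nameless form: [VBound i] refers to the [i]-th enclosing [VAbs];
    [VData] is the single value of every data type. *)
Inductive value : Type :=
| VAtom (c : atom)
| VBound (i : nat)
| VData
| VAbs (v : value).

Definition swap_atom (c d e : atom) : atom :=
  if atom_dec e c then d else if atom_dec e d then c else e.

Fixpoint swap_value (c d : atom) (v : value) : value :=
  match v with
  | VAtom e => VAtom (swap_atom c d e)
  | VAbs w => VAbs (swap_value c d w)
  | _ => v
  end.

Fixpoint supp (v : value) : list atom :=
  match v with
  | VAtom e => [e]
  | VAbs w => supp w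
  | _ => []
  end.

Fixpoint close_value (k : nat) (c : atom) (v : value) : value :=
  match v with
  | VAtom e => if atom_dec e c then VBound k else VAtom e
  | VAbs w => VAbs (close_value (S k) c w)
  | _ => v
  end.

Fixpoint open_value (k : nat) (c : atom) (v : value) : value :=
  match v with
  | VBound i => if Nat.eqb i k then VAtom c else VBound i
  | VAbs w => VAbs (open_value (S k) c w)
  | _ => v
  end.

Fixpoint lc_value (k : nat) (v : value) : Prop :=
  match v with
  | VBound i => i < k
  | VAbs w => lc_value (S k) w
  | _ => True
  end.

Lemma swap_atom_id c e : swap_atom c c e = e.
Proof. unfold swap_atom; case_atom_dec. Qed.

Lemma swap_atom_left c d : swap_atom c d c = d.
Proof. unfold swap_atom; case_atom_dec. Qed.

Lemma swap_atom_invol c d e : swap_atom c d (swap_atom c d e) = e.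
Proof. unfold swap_atom; case_atom_dec. Qed.

Lemma swap_atom_inj c d e f : swap_atom c d e = swap_atom c d f -> e = f.
Proof. intros E. now rewrite <- (swap_atom_invol c d e), E, swap_atom_invol. Qed.

Lemma swap_atom_equivariant c d e f g :
  swap_atom c d (swap_atom e f g)
  = swap_atom (swap_atom c d e) (swap_atom c d f) (swap_atom c d g).
Proof. unfold swap_atom; case_atom_dec. Qed.

Lemma swap_value_id c v : swap_value c c v = v.
Proof. induction v; simpl; f_equal; auto using swap_atom_id. Qed.

Lemma swap_value_invol c d v : swap_value c d (swap_value c d v) = v.
Proof. induction v; simpl; f_equal; auto using swap_atom_invol. Qed.

Lemma swap_value_equivariant c d e f v :
  swap_value c d (swap_value e f v)
  = swap_value (swap_atom c d e) (swap_atom c d f) (swap_value c d v).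
Proof. induction v; simpl; f_equal; auto using swap_atom_equivariant. Qed.

Lemma swap_value_fresh c d v : ~ In c (supp v) -> ~ In d (supp v) -> swap_value c d v = v.
Proof. induction v; simpl; intros; f_equal; auto. unfold swap_atom; case_atom_dec; tauto. Qed.

Lemma supp_swap_value c d v : supp (swap_value c d v) = map (swap_atom c d) (supp v).
Proof. induction v; simpl; auto. Qed.

Lemma notin_supp_swap c d e v :
  ~ In e (supp v) -> ~ In (swap_atom c d e) (supp (swap_value c d v)).
Proof.
  rewrite supp_swap_value. intros He Hin. apply in_map_iff in Hin as (e' & E & He').
  apply swap_atom_inj in E. congruence.
Qed.

Lemma swap_value_close c d k e v :
  swap_value c d (close_value k e v) = close_value k (swap_atom c d e) (swap_value c d v).
Proof.
  revert k; induction v; intro k; simpl; rewrite ?IHv; auto.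
  case_atom_dec; simpl; case_atom_dec. exfalso; eauto using swap_atom_inj.
Qed.

Lemma close_swap_fresh c d k v :
  ~ In c (supp v) -> close_value k c (swap_value c d v) = close_value k d v.
Proof.
  revert k; induction v; intros k H; simpl in *; rewrite ?IHv; auto.
  unfold swap_atom; case_atom_dec; tauto.
Qed.

(** Closing is injective up to a swap with a fresh atom: this is alpha-equivalence. *)
Lemma close_value_inj c d k v w :
  lc_value k v -> lc_value k w -> close_value k c v = close_value k d w ->
  v = swap_value c d w /\ (c = d \/ ~ In c (supp w)).
Proof.
  revert k w; induction v; intros k w Hv Hw E; destruct w; simpl in *;
    case_atom_dec; try (injection E; intros; subst; lia).
  - destruct (atom_dec c d); subst; [rewrite swap_atom_id; auto|].
    unfold swap_atom; case_atom_dec; intuition.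
  - injection E as ->. unfold swap_atom; case_atom_dec; intuition.
  - injection E as ->. destruct (atom_dec c d); auto.
  - destruct (atom_dec c d); auto.
  - injection E as E. destruct (IHv _ _ Hv Hw E) as [-> H]. auto.
Qed.

Lemma close_open_value c k v : ~ In c (supp v) -> close_value k c (open_value k c v) = v.
Proof.
  revert k; induction v; intros k H; simpl in *; rewrite ?IHv; auto.
  - case_atom_dec; tauto.
  - destruct (Nat.eqb_spec i k); simpl; subst; case_atom_dec.
Qed.

Lemma supp_close_value k c v : incl (supp (close_value k c v)) (supp v).
Proof.
  revert k; induction v; intros k; simpl; case_atom_dec; auto using incl_refl, incl_nil_l.
Qed.

End NominalValues.

Arguments VBound {atom}.
Arguments VData {atom}.
Unset Implicit Arguments.

Section Model.
Variable sg : signature.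

(** Atoms of name type [ν] are the pairs [(ν, n)], so fresh atoms of every name type exist. *)
Definition name_atom := (nty sg * nat)%type.
Definition val := value name_atom.

Lemma fresh_nat (l : list nat) : exists n, ~ In n l.
Proof.
  exists (S (list_max l)). intros H.
  pose proof (proj1 (list_max_le l _) (le_n _)) as Hmax.
  rewrite Forall_forall in Hmax. specialize (Hmax _ H). lia.
Qed.

Lemma fresh_atom (ν : nty sg) (l : list name_atom) : exists n, ~ In (ν, n) l.
Proof.
  destruct (fresh_nat (map snd l)) as [n Hn]. exists n. intros H.
  apply Hn, in_map_iff. exists (ν, n); auto.
Qed.

(** [has_vtype E v τ]: [v] is a value of type [τ] when the [i]-th enclosing abstraction
    binds an atom of name type [nth i E]. *)
Fixpoint has_vtype (E : list (nty sg)) (v : val) (τ : sty sg) : Prop :=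
  match v, τ with
  | VAtom c, TName _ ν => fst c = ν
  | VBound i, TName _ ν => nth_error E i = Some ν
  | VData, TData _ _ => True
  | VAbs w, TAbs ν τ' => has_vtype (ν :: E) w τ'
  | _, _ => False
  end.

Lemma has_vtype_lc E v τ : has_vtype E v τ -> lc_value (length E) v.
Proof.
  revert E τ; induction v; intros E τ H; destruct τ; simpl in *; try tauto.
  - apply nth_error_Some. congruence.
  - exact (IHv _ _ H).
Qed.

Lemma has_vtype_name v ν : has_vtype [] v (TName _ ν) -> exists c, v = VAtom c /\ fst c = ν.
Proof. destruct v as [c|[]| |]; simpl; intros H; try discriminate; try tauto; eauto. Qed.

Lemma has_vtype_close E v τ c : has_vtype E v τ ->
  has_vtype (E ++ [fst c]) (close_value (length E) c v) τ.
Proof.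
  revert E τ; induction v; intros E τ H; destruct τ; simpl in *; try tauto.
  - case_atom_dec; simpl; auto.
    rewrite nth_error_app2, Nat.sub_diag; auto.
  - rewrite nth_error_app1; auto. apply nth_error_Some. congruence.
  - exact (IHv (n :: E) τ H).
Qed.

Lemma has_vtype_open E v τ c : has_vtype (E ++ [fst c]) v τ ->
  has_vtype E (open_value (length E) c v) τ.
Proof.
  revert E τ; induction v; intros E τ H; destruct τ; simpl in *; try tauto.
  - assert (Hi : i < length (E ++ [fst c])) by (apply nth_error_Some; congruence).
    rewrite length_app in Hi; simpl in Hi.
    destruct (Nat.eqb_spec i (length E)); simpl.
    + subst. rewrite nth_error_app2, Nat.sub_diag in H by lia. simpl in H. congruence.
    + rewrite nth_error_app1 in H by lia. exact H.
  - exact (IHv (n :: E) τ H).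
Qed.

Lemma has_vtype_swap E v τ c d : fst c = fst d -> has_vtype E v τ ->
  has_vtype E (swap_value c d v) τ.
Proof.
  revert E τ; induction v; intros E τ Hcd H; destruct τ; simpl in *; try tauto.
  - unfold swap_atom. case_atom_dec.
  - auto.
Qed.

(** Evaluation of terms under a valuation [ρ] of the free variables, [η] of the free
    name-symbols, and the lists [ev], [en] of values of the bound ones (innermost first). *)
Fixpoint eval (ρ η : nat -> val) (ev en : list val) (t : term sg) : val :=
  match t with
  | tvar _ x => ρ x
  | tbvar _ i => nth i ev VData
  | tname _ a => η a
  | tbname _ i => nth i en VData
  | tswap a b u =>
      match eval ρ η ev en a, eval ρ η ev en b with
      | VAtom c, VAtom d => swap_value c d (eval ρ η ev en u)
      | _, _ => eval ρ η ev en u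
      end
  | tabs a u =>
      match eval ρ η ev en a with
      | VAtom c => VAbs (close_value 0 c (eval ρ η ev en u))
      | _ => VData
      end
  | _ => VData
  end.

Fixpoint tfv (t : term sg) : list nat :=
  match t with
  | tvar _ x => [x]
  | tswap a b u => tfv a ++ tfv b ++ tfv u
  | tabs a u => tfv a ++ tfv u
  | _ => []
  end.

Fixpoint tfn (t : term sg) : list nat :=
  match t with
  | tname _ a => [a]
  | tswap a b u => tfn a ++ tfn b ++ tfn u
  | tabs a u => tfn a ++ tfn u
  | _ => []
  end.

Lemma eval_ext ρ ρ' η η' ev en t :
  (forall x, In x (tfv t) -> ρ x = ρ' x) -> (forall a, In a (tfn t) -> η a = η' a) ->
  eval ρ η ev en t = eval ρ' η' ev en t.
Proof.
  induction t; simpl; intros Hρ Hη; auto;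
    rewrite ?IHt1, ?IHt2, ?IHt3; auto;
    intros; (apply Hρ || apply Hη); rewrite !in_app_iff; tauto.
Qed.

Lemma eval_open_var ρ η ev en s t :
  (forall ev en, eval ρ η ev en s = eval ρ η [] [] s) ->
  eval ρ η ev en (topen_var (length ev) s t) = eval ρ η (ev ++ [eval ρ η [] [] s]) en t.
Proof.
  intros Hs; induction t; simpl; rewrite ?IHt1, ?IHt2, ?IHt3; auto.
  destruct (Nat.eqb_spec i (length ev)) as [->|Hi].
  - rewrite Hs, app_nth2, Nat.sub_diag; auto.
  - destruct (Nat.lt_ge_cases i (length ev)); simpl.
    + now rewrite app_nth1.
    + rewrite !nth_overflow; rewrite ?length_app; simpl; auto; lia.
Qed.

Lemma eval_open_name ρ η ev en c t :
  eval ρ η ev en (topen_name (length en) c t) = eval ρ η ev (en ++ [η c]) t.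
Proof.
  induction t; simpl; rewrite ?IHt1, ?IHt2, ?IHt3; auto.
  destruct (Nat.eqb_spec i (length en)) as [->|Hi]; simpl.
  - rewrite app_nth2, Nat.sub_diag; auto.
  - destruct (Nat.lt_ge_cases i (length en)).
    + now rewrite app_nth1.
    + rewrite !nth_overflow; rewrite ?length_app; simpl; auto; lia.
Qed.

Lemma eval_subst ρ η ev en z s s' t :
  eval ρ η ev en s = eval ρ η ev en s' ->
  eval ρ η ev en (tsubst z s t) = eval ρ η ev en (tsubst z s' t).
Proof.
  intros Hs; induction t; simpl; rewrite ?IHt1, ?IHt2, ?IHt3; auto.
  destruct (Nat.eqb x z); auto.
Qed.

Lemma tfv_open_var k s t : incl (tfv t) (tfv (topen_var k s t)).
Proof. induction t; simpl; auto using incl_refl, incl_nil_l, incl_app_app. Qed.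
Lemma tfn_open_var k s t : incl (tfn t) (tfn (topen_var k s t)).
Proof. induction t; simpl; auto using incl_refl, incl_nil_l, incl_app_app. Qed.
Lemma tfv_open_name k c t : incl (tfv t) (tfv (topen_name k c t)).
Proof. induction t; simpl; auto using incl_refl, incl_nil_l, incl_app_app. Qed.
Lemma tfn_open_name k c t : incl (tfn t) (tfn (topen_name k c t)).
Proof. induction t; simpl; auto using incl_refl, incl_nil_l, incl_app_app. Qed.

Fixpoint ctx_supp (ρ η : nat -> val) (Σ : ctx sg) : list name_atom :=
  match Σ with
  | [] => []
  | CVar x _ :: Σ' => supp (ρ x) ++ ctx_supp ρ η Σ'
  | CName _ a _ :: Σ' => supp (η a) ++ ctx_supp ρ η Σ'
  end.

Fixpoint ctx_ok (ρ η : nat -> val) (Σ : ctx sg) : Prop :=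
  match Σ with
  | [] => True
  | CVar x τ :: Σ' => has_vtype [] (ρ x) τ /\ ctx_ok ρ η Σ'
  | CName _ a ν :: Σ' =>
      (exists n, η a = VAtom (ν, n) /\ ~ In (ν, n) (ctx_supp ρ η Σ')) /\ ctx_ok ρ η Σ'
  end.

Lemma ctx_supp_var ρ η Σ x τ : In (CVar x τ) Σ -> incl (supp (ρ x)) (ctx_supp ρ η Σ).
Proof.
  induction Σ as [|[y σ|b ν] Σ IH]; simpl; [tauto| |]; intros [E|H];
    try injection E as -> ->; try discriminate; auto using incl_appl, incl_appr, incl_refl.
Qed.

Lemma ctx_supp_name ρ η Σ a ν : In (CName _ a ν) Σ -> incl (supp (η a)) (ctx_supp ρ η Σ).
Proof.
  induction Σ as [|[y σ|b ν'] Σ IH]; simpl; [tauto| |]; intros [E|H];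
    try injection E as -> ->; try discriminate; auto using incl_appl, incl_appr, incl_refl.
Qed.

Lemma ctx_ok_var ρ η Σ x τ : ctx_ok ρ η Σ -> In (CVar x τ) Σ -> has_vtype [] (ρ x) τ.
Proof.
  induction Σ as [|[y σ|b ν] Σ IH]; simpl; [tauto| |]; intros Hok [E|H];
    try injection E as -> ->; try discriminate; tauto.
Qed.

Lemma ctx_ok_name ρ η Σ a ν : ctx_ok ρ η Σ -> In (CName _ a ν) Σ ->
  exists n, η a = VAtom (ν, n).
Proof.
  induction Σ as [|[y σ|b ν'] Σ IH]; simpl; [tauto| |]; intros Hok [E|H];
    try injection E as -> ->; try discriminate; firstorder eauto.
Qed.

Definition agree (Σ : ctx sg) (ρ η ρ' η' : nat -> val) : Prop :=
  (forall x, var_in x Σ -> ρ x = ρ' x) /\ (forall a, name_in a Σ -> η a = η' a).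

Lemma agree_tail {Σ e ρ η ρ' η'} : agree (e :: Σ) ρ η ρ' η' -> agree Σ ρ η ρ' η'.
Proof. intros [Hρ Hη]; split; [intros x [τ H] | intros a [ν H]]; firstorder. Qed.

Lemma ctx_supp_agree {Σ ρ η ρ' η'} :
  agree Σ ρ η ρ' η' -> ctx_supp ρ η Σ = ctx_supp ρ' η' Σ.
Proof.
  induction Σ as [|[y σ|b ν] Σ IH]; simpl; intros Hag; auto;
    rewrite (IH (agree_tail Hag)); destruct Hag as [Hρ Hη].
  - rewrite (Hρ y); [|exists σ; simpl]; auto.
  - rewrite (Hη b); [|exists ν; simpl]; auto.
Qed.

Lemma ctx_ok_agree Σ ρ η ρ' η' :
  agree Σ ρ η ρ' η' -> ctx_ok ρ η Σ -> ctx_ok ρ' η' Σ.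
Proof.
  induction Σ as [|[y σ|b ν] Σ IH]; simpl; intros Hag Hok; auto;
    pose proof (ctx_supp_agree (agree_tail Hag)) as Esupp;
    specialize (IH (agree_tail Hag)); destruct Hag as [Hρ Hη].
  - rewrite <- (Hρ y); [|exists σ; simpl]; tauto.
  - rewrite <- (Hη b), <- Esupp; [|exists ν; simpl]; tauto.
Qed.

Lemma eval_closed Σ t τ : has_type Σ t τ ->
  forall ρ η ev en, eval ρ η ev en t = eval ρ η [] [] t.
Proof. induction 1; intros; simpl; rewrite ?IHhas_type1, ?IHhas_type2, ?IHhas_type3; auto. Qed.

Lemma has_type_fv Σ t τ : has_type Σ t τ ->
  (forall x, In x (tfv t) -> var_in x Σ) /\ (forall a, In a (tfn t) -> name_in a Σ).
Proof.
  induction 1; simpl; split; intros y Hy; rewrite ?in_app_iff in Hy; try tauto;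
    try (destruct Hy as [<-|[]]; eexists; eauto); firstorder.
Qed.

Lemma eval_well_typed ρ η Σ t τ : ctx_ok ρ η Σ -> has_type Σ t τ ->
  has_vtype [] (eval ρ η [] [] t) τ /\ incl (supp (eval ρ η [] [] t)) (ctx_supp ρ η Σ).
Proof.
  intros Hok; induction 1 as [x τ H|a ν H|c|f ts _|a b t ν τ _ [Ha Sa] _ [Hb Sb] _ [Ht St]
    |a t ν τ _ [Ha Sa] _ [Ht St]]; simpl.
  - eauto using ctx_ok_var, ctx_supp_var.
  - destruct (ctx_ok_name _ _ _ _ _ Hok H) as [n En].
    split; [now rewrite En|eauto using ctx_supp_name].
  - split; [exact I|apply incl_nil_l].
  - split; [exact I|apply incl_nil_l].
  - destruct (has_vtype_name _ _ Ha) as [c [Ec Hc]], (has_vtype_name _ _ Hb) as [d [Ed Hd]].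
    rewrite Ec, Ed in *.
    split; [apply has_vtype_swap; congruence|].
    rewrite supp_swap_value. intros e He. apply in_map_iff in He as [e' [<- He']].
    unfold swap_atom; case_atom_dec; [apply Sb|apply Sa|apply St]; simpl; auto.
  - destruct (has_vtype_name _ _ Ha) as [c [Ec <-]]. rewrite Ec in *.
    split; [exact (has_vtype_close [] _ _ c Ht)|].
    eauto using incl_tran, supp_close_value.
Qed.

Lemma eval_name ρ η Σ t ν : ctx_ok ρ η Σ -> has_type Σ t (TName _ ν) ->
  exists c, eval ρ η [] [] t = VAtom c /\ fst c = ν.
Proof. intros Hok Ht. exact (has_vtype_name _ _ (proj1 (eval_well_typed _ _ _ _ _ Hok Ht))). Qed.

Fixpoint sem (ρ η : nat -> val) (ev en : list val) (A : form sg) : Prop :=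
  match A with
  | fTop _ | fPred _ _ => True
  | fBot _ => False
  | fEq t u => eval ρ η ev en t = eval ρ η ev en u
  | fFresh a t => exists c, eval ρ η ev en a = VAtom c /\ ~ In c (supp (eval ρ η ev en t))
  | fAnd B C => sem ρ η ev en B /\ sem ρ η ev en C
  | fOr B C => sem ρ η ev en B \/ sem ρ η ev en C
  | fImp B C => sem ρ η ev en B -> sem ρ η ev en C
  | fAll σ B => forall v, has_vtype [] v σ -> sem ρ η (v :: ev) en B
  | fEx σ B => exists v, has_vtype [] v σ /\ sem ρ η (v :: ev) en B
  | fNew ν B => exists l, forall n, ~ In (ν, n) l -> sem ρ η ev (VAtom (ν, n) :: en) B
  end.

Fixpoint ffv (A : form sg) : list nat :=
  match A with
  | fEq t u | fFresh t u => tfv t ++ tfv u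
  | fAnd B C | fOr B C | fImp B C => ffv B ++ ffv C
  | fAll _ B | fEx _ B | fNew _ B => ffv B
  | _ => []
  end.

Fixpoint ffn (A : form sg) : list nat :=
  match A with
  | fEq t u | fFresh t u => tfn t ++ tfn u
  | fAnd B C | fOr B C | fImp B C => ffn B ++ ffn C
  | fAll _ B | fEx _ B | fNew _ B => ffn B
  | _ => []
  end.

Lemma sem_ext ρ ρ' η η' A ev en :
  (forall x, In x (ffv A) -> ρ x = ρ' x) -> (forall a, In a (ffn A) -> η a = η' a) ->
  (sem ρ η ev en A <-> sem ρ' η' ev en A).
Proof.
  revert ev en; induction A; intros ev en Hρ Hη; simpl in *; try tauto;
    try (rewrite (eval_ext ρ ρ' η η' ev en t), (eval_ext ρ ρ' η η' ev en u)
      || rewrite (eval_ext ρ ρ' η η' ev en a), (eval_ext ρ ρ' η η' ev en t)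
      || setoid_rewrite IHA1 || setoid_rewrite IHA);
    try setoid_rewrite IHA2; try tauto;
    intros; (apply Hρ || apply Hη); rewrite in_app_iff; tauto.
Qed.

Lemma sem_open_var ρ η s A ev en :
  (forall ev en, eval ρ η ev en s = eval ρ η [] [] s) ->
  (sem ρ η ev en (fopen_var (length ev) s A) <-> sem ρ η (ev ++ [eval ρ η [] [] s]) en A).
Proof.
  intros Hs; revert ev en; induction A; intros ev en; simpl;
    rewrite ?eval_open_var by exact Hs; try tauto.
  - now rewrite IHA1, IHA2.
  - now rewrite IHA1, IHA2.
  - now rewrite IHA1, IHA2.
  - now setoid_rewrite <- (IHA (_ :: ev)).
  - now setoid_rewrite <- (IHA (_ :: ev)).
  - now setoid_rewrite IHA.
Qed.

Lemma sem_open_name ρ η c A ev en :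
  sem ρ η ev en (fopen_name (length en) c A) <-> sem ρ η ev (en ++ [η c]) A.
Proof.
  revert ev en; induction A; intros ev en; simpl; rewrite ?eval_open_name; try tauto.
  - now rewrite IHA1, IHA2.
  - now rewrite IHA1, IHA2.
  - now rewrite IHA1, IHA2.
  - now setoid_rewrite IHA.
  - now setoid_rewrite IHA.
  - now setoid_rewrite <- (IHA ev (_ :: en)).
Qed.

Lemma ffv_open_var k s A : incl (ffv A) (ffv (fopen_var k s A)).
Proof.
  revert k; induction A; intro k; simpl;
    auto using incl_refl, incl_app_app, tfv_open_var.
Qed.
Lemma ffn_open_var k s A : incl (ffn A) (ffn (fopen_var k s A)).
Proof.
  revert k; induction A; intro k; simpl;
    auto using incl_refl, incl_app_app, tfn_open_var.
Qed.
Lemma ffv_open_name k c A : incl (ffv A) (ffv (fopen_name k c A)).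
Proof.
  revert k; induction A; intro k; simpl;
    auto using incl_refl, incl_app_app, tfv_open_name.
Qed.
Lemma ffn_open_name k c A : incl (ffn A) (ffn (fopen_name k c A)).
Proof.
  revert k; induction A; intro k; simpl;
    auto using incl_refl, incl_app_app, tfn_open_name.
Qed.

Definition entry_symbol (e : centry sg) : nat :=
  match e with CVar x _ => x | CName _ a _ => a end.

Lemma fresh_for_ctx (Σ : ctx sg) (l : list nat) :
  exists z, ~ var_in z Σ /\ ~ name_in z Σ /\ ~ In z l.
Proof.
  destruct (fresh_nat (l ++ map entry_symbol Σ)) as [z Hz].
  exists z; repeat split; [intros [τ H]|intros [ν H]|intros H]; apply Hz, in_app_iff; auto.
  - right. exact (in_map entry_symbol _ _ H).
  - right. exact (in_map entry_symbol _ _ H).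
Qed.

Definition supported (Σ : ctx sg) (A : form sg) : Prop :=
  (forall x, In x (ffv A) -> var_in x Σ) /\ (forall a, In a (ffn A) -> name_in a Σ).

Lemma wff_supported Σ A : wff Σ A -> supported Σ A.
Proof.
  unfold supported; induction 1 as [Σ|Σ|Σ p ts Hts|Σ t u τ Ht Hu|Σ a t ν τ Ha Ht
    |Σ B C _ IHB _ IHC|Σ B C _ IHB _ IHC|Σ B C _ IHB _ IHC
    |Σ σ B _ IH|Σ σ B _ IH|Σ ν B _ IH]; simpl;
    try (split; intros ? []).
  { destruct (has_type_fv _ _ _ Ht), (has_type_fv _ _ _ Hu).
    split; intros y Hy; apply in_app_iff in Hy as [Hy|Hy]; auto. }
  { destruct (has_type_fv _ _ _ Ha), (has_type_fv _ _ _ Ht).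
    split; intros y Hy; apply in_app_iff in Hy as [Hy|Hy]; auto. }
  1-3: destruct IHB, IHC; split; intros y Hy; apply in_app_iff in Hy as [Hy|Hy]; auto.
  all: split; intros y Hy; destruct (fresh_for_ctx Σ [y]) as (z & Hzv & Hzn & Hzy);
    destruct (IH z ltac:(assumption)) as [IHv IHn];
    match goal with
    | |- var_in _ _ => destruct (IHv y) as [τ [E|H]]
    | |- name_in _ _ => destruct (IHn y) as [τ [E|H]]
    end;
    try (exists τ; exact H); try discriminate;
    try (injection E; intros; subst; simpl in Hzy; tauto);
    revert Hy; apply ffv_open_var || apply ffn_open_var || apply ffv_open_name
      || apply ffn_open_name.
Qed.

Lemma sem_agree Σ ρ η ρ' η' A ev en : supported Σ A -> agree Σ ρ η ρ' η' ->
  (sem ρ η ev en A <-> sem ρ' η' ev en A).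
Proof. intros [HA1 HA2] [Hρ Hη]. apply sem_ext; auto. Qed.

Definition holds (ρ η : nat -> val) (A : form sg) : Prop := sem ρ η [] [] A.

Lemma Forall_holds_agree Σ ρ η ρ' η' Γ : Forall (wff Σ) Γ -> agree Σ ρ η ρ' η' ->
  (Forall (holds ρ η) Γ <-> Forall (holds ρ' η') Γ).
Proof.
  intros HΓ Hag; induction HΓ as [|A Γ HA _ IH]; [split; constructor|].
  rewrite !Forall_cons_iff, IH. unfold holds.
  now rewrite (sem_agree _ _ _ _ _ _ _ _ (wff_supported _ _ HA) Hag).
Qed.

Lemma Exists_holds_agree Σ ρ η ρ' η' Δ : Forall (wff Σ) Δ -> agree Σ ρ η ρ' η' ->
  (Exists (holds ρ η) Δ <-> Exists (holds ρ' η') Δ).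
Proof.
  intros HΔ Hag; induction HΔ as [|A Δ HA _ IH]; [split; intros H; inversion H|].
  rewrite !Exists_cons, IH. unfold holds.
  now rewrite (sem_agree _ _ _ _ _ _ _ _ (wff_supported _ _ HA) Hag).
Qed.

Definition upd (f : nat -> val) (x : nat) (v : val) : nat -> val :=
  fun y => if Nat.eqb y x then v else f y.

Lemma upd_eq f x v : upd f x v x = v.
Proof. unfold upd; now rewrite Nat.eqb_refl. Qed.

Lemma upd_neq f x v y : y <> x -> upd f x v y = f y.
Proof. unfold upd; intros H; destruct (Nat.eqb_spec y x); congruence. Qed.

Lemma agree_upd_var Σ ρ η x v : ~ var_in x Σ -> agree Σ ρ η (upd ρ x v) η.
Proof. intros Hx; split; intros y Hy; auto. rewrite upd_neq; congruence. Qed.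

Lemma agree_upd_name Σ ρ η a v : ~ name_in a Σ -> agree Σ ρ η ρ (upd η a v).
Proof. intros Ha; split; intros y Hy; auto. rewrite upd_neq; congruence. Qed.

Lemma ctx_ok_extend_var Σ ρ η x σ v : ~ var_in x Σ -> ctx_ok ρ η Σ -> has_vtype [] v σ ->
  ctx_ok (upd ρ x v) η (CVar x σ :: Σ).
Proof.
  intros Hx Hok Hv; simpl; rewrite upd_eq.
  eauto using ctx_ok_agree, agree_upd_var.
Qed.

Lemma ctx_ok_extend_name Σ ρ η a ν n : ~ name_in a Σ -> ctx_ok ρ η Σ ->
  ~ In (ν, n) (ctx_supp ρ η Σ) -> ctx_ok ρ (upd η a (VAtom (ν, n))) (CName _ a ν :: Σ).
Proof.
  intros Ha Hok Hn; simpl; rewrite upd_eq, <- (ctx_supp_agree (agree_upd_name _ ρ η _ _ Ha)).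
  split; eauto using ctx_ok_agree, agree_upd_name.
Qed.

Lemma ctx_fresh_holds ρ η Σ a t : ctx_ok ρ η Σ -> ctx_fresh Σ (fFresh (tname _ a) t) ->
  holds ρ η (fFresh (tname _ a) t).
Proof.
  induction Σ as [|[y σ|b ν] Σ IH]; simpl; intros Hok H; try tauto.
  destruct H as [H|(t' & τ & Ht & E)]; [tauto|].
  injection E as <- <-. destruct Hok as [(n & En & Hn) Hok].
  exists (ν, n). split; auto.
  intros Hin. exact (Hn (proj2 (eval_well_typed _ _ _ _ _ Hok Ht) _ Hin)).
Qed.

Lemma holds_fresh_or_eq ρ η Σ a b ν τ : ctx_ok ρ η Σ -> has_type Σ a (TName _ ν) ->
  has_type Σ a τ -> has_type Σ b τ -> holds ρ η (fFresh a b) \/ holds ρ η (fEq a b).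
Proof.
  intros Hok Ha Ha' Hb.
  destruct (eval_name _ _ _ _ _ Hok Ha) as (c & Ec & _).
  pose proof (proj1 (eval_well_typed _ _ _ _ _ Hok Ha')) as Va; rewrite Ec in Va.
  destruct τ; simpl in Va; try contradiction.
  destruct (eval_name _ _ _ _ _ Hok Hb) as (d & Ed & _).
  unfold holds; simpl; rewrite Ec, Ed.
  destruct (atom_dec c d) as [<-|Hcd]; [now right|left].
  exists c; split; auto; simpl; intros [E|[]]; congruence.
Qed.

Ltac eval_names Hok :=
  repeat match goal with
  | H : has_type _ ?t (TName _ _) |- _ =>
      let c := fresh "c" in let Ec := fresh "Ec" in let Hc := fresh "Hc" in
      destruct (eval_name _ _ _ _ _ Hok H) as [c [Ec Hc]]; clear H; rewrite ?Ec in *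
  end.

Lemma ax_inst_sound ρ η Σ Ps Qs : ctx_ok ρ η Σ -> ax_inst Σ Ps Qs ->
  Forall (wff Σ) Qs -> Forall (holds ρ η) Ps -> Exists (holds ρ η) Qs.
Proof.
  intros Hok Hax HQs HPs; unfold holds in *.
  destruct Hax; repeat match goal with H : Forall _ (_ :: _) |- _ => inversion_clear H end;
    simpl in *; repeat match goal with H : wff _ _ |- _ => inversion H; subst; clear H end;
    try match goal with |- Exists _ [_] => apply Exists_cons_hd; simpl end;
    repeat match goal with H : exists c, eval _ _ _ _ _ = VAtom c /\ _ |- _ =>
      let c := fresh "c" in let Ec := fresh "Ec" in
      destruct H as (c & Ec & ?); try rewrite Ec in *
    end.
  - destruct (eval ρ η [] [] a); [apply swap_value_id| | |]; auto.
  - destruct (eval ρ η [] [] a), (eval ρ η [] [] b); simpl; try apply swap_value_invol; auto.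
  - match goal with Ht : has_type _ (tswap _ _ _) _ |- _ => inversion Ht; subst end.
    eval_names Hok. simpl. now rewrite swap_atom_left.
  - destruct (eval ρ η [] [] a), (eval ρ η [] [] b); auto.
  - destruct (eval ρ η [] [] a), (eval ρ η [] [] b); auto.
  - destruct (eval ρ η [] [] a), (eval ρ η [] [] b), (eval ρ η [] [] c), (eval ρ η [] [] d);
      simpl; try apply swap_value_equivariant; auto.
  - destruct (eval ρ η [] [] a), (eval ρ η [] [] b), (eval ρ η [] [] c); simpl; auto.
    now rewrite swap_value_close.
  - exact I.
  - now rewrite H.
  - destruct (eval ρ η [] [] a), (eval ρ η [] [] b); simpl; eauto.
    eexists; split; [reflexivity|]. now apply notin_supp_swap.
  - simpl. now apply swap_value_fresh.
  - eval_names Hok. eexists; split; [reflexivity|]. simpl. intros [E|[]]; congruence.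
  - simpl in *. tauto.
  - match goal with
    | Ha : has_type _ a (TName _ _), Ha' : has_type _ a ?τ, Hb : has_type _ b ?τ |- _ =>
        destruct (holds_fresh_or_eq _ _ _ _ _ _ _ Hok Ha Ha' Hb); [left|right; left]; assumption
    end.
  - match goal with Hby : has_type _ (tabs b y) _, Hx : eval _ _ _ _ x = _ |- _ =>
      inversion Hby; subst; eval_names Hok; rewrite Hx
    end.
    f_equal. now apply close_swap_fresh.
Qed.

Lemma holds_open_term Σ ρ η t σ A : has_type Σ t σ ->
  holds ρ η (fopen_var 0 t A) <-> sem ρ η [eval ρ η [] [] t] [] A.
Proof. intros Ht. exact (sem_open_var _ _ _ A [] [] (eval_closed _ _ _ Ht ρ η)). Qed.

Lemma holds_open_upd_var Σ ρ η x v A : ~ var_in x Σ -> supported Σ A ->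
  holds (upd ρ x v) η (fopen_var 0 (tvar _ x) A) <-> sem ρ η [v] [] A.
Proof.
  intros Hx HA. unfold holds.
  rewrite (sem_open_var _ _ _ A [] []) by reflexivity. simpl. rewrite upd_eq.
  symmetry. exact (sem_agree _ _ _ _ _ _ _ _ HA (agree_upd_var _ _ _ _ v Hx)).
Qed.

Lemma holds_open_upd_name Σ ρ η a c A : ~ name_in a Σ -> supported Σ A ->
  holds ρ (upd η a (VAtom c)) (fopen_name 0 a A) <-> sem ρ η [] [VAtom c] A.
Proof.
  intros Ha HA. unfold holds.
  rewrite (sem_open_name _ _ _ A [] []). simpl. rewrite upd_eq.
  symmetry. exact (sem_agree _ _ _ _ _ _ _ _ HA (agree_upd_name _ _ _ _ _ Ha)).
Qed.

Definition valid (Σ : ctx sg) (Γ Δ : list (form sg)) : Prop :=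
  forall ρ η, ctx_ok ρ η Σ -> Forall (holds ρ η) Γ -> Exists (holds ρ η) Δ.

Lemma valid_init Σ Γ Δ P : In P Γ -> In P Δ -> valid Σ Γ Δ.
Proof.
  intros HΓ HΔ ρ η _ Hh. apply Exists_exists. exists P. split; auto.
  exact (proj1 (Forall_forall _ _) Hh _ HΓ).
Qed.

Lemma valid_topR Σ Γ Δ : In (fTop _) Δ -> valid Σ Γ Δ.
Proof. intros HΔ ρ η _ _. apply Exists_exists. now exists (fTop _). Qed.

Lemma valid_botL Σ Γ Δ : In (fBot _) Γ -> valid Σ Γ Δ.
Proof. intros HΓ ρ η _ Hh. destruct (proj1 (Forall_forall _ _) Hh _ HΓ). Qed.

Lemma valid_andL Σ Γ Γ' Δ A B : Permutation Γ (fAnd A B :: Γ') ->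
  valid Σ (A :: B :: Γ') Δ -> valid Σ Γ Δ.
Proof.
  intros Hp IH ρ η Hok HΓ. rewrite Hp, Forall_cons_iff in HΓ. destruct HΓ as [[HA HB] HΓ'].
  apply IH; auto.
Qed.

Lemma valid_andR Σ Γ Δ Δ' A B : Permutation Δ (fAnd A B :: Δ') ->
  valid Σ Γ (A :: Δ') -> valid Σ Γ (B :: Δ') -> valid Σ Γ Δ.
Proof.
  intros Hp IH1 IH2 ρ η Hok HΓ. rewrite Hp, Exists_cons.
  specialize (IH1 ρ η Hok HΓ); specialize (IH2 ρ η Hok HΓ).
  rewrite Exists_cons in IH1, IH2. unfold holds in *; simpl. tauto.
Qed.

Lemma valid_orL Σ Γ Γ' Δ A B : Permutation Γ (fOr A B :: Γ') ->
  valid Σ (A :: Γ') Δ -> valid Σ (B :: Γ') Δ -> valid Σ Γ Δ.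
Proof.
  intros Hp IH1 IH2 ρ η Hok HΓ. rewrite Hp, Forall_cons_iff in HΓ.
  destruct HΓ as [[HA|HB] HΓ']; [apply IH1|apply IH2]; auto.
Qed.

Lemma valid_orR Σ Γ Δ Δ' A B : Permutation Δ (fOr A B :: Δ') ->
  valid Σ Γ (A :: B :: Δ') -> valid Σ Γ Δ.
Proof.
  intros Hp IH ρ η Hok HΓ. rewrite Hp, Exists_cons.
  specialize (IH ρ η Hok HΓ). rewrite !Exists_cons in IH. unfold holds in *; simpl. tauto.
Qed.

Lemma valid_impL Σ Γ Γ' Δ A B : Permutation Γ (fImp A B :: Γ') ->
  valid Σ Γ' (A :: Δ) -> valid Σ (B :: Γ') Δ -> valid Σ Γ Δ.
Proof.
  intros Hp IH1 IH2 ρ η Hok HΓ. rewrite Hp, Forall_cons_iff in HΓ. destruct HΓ as [HAB HΓ'].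
  specialize (IH1 ρ η Hok HΓ'). rewrite Exists_cons in IH1.
  destruct IH1 as [HA|HΔ]; auto.
  apply IH2; auto. constructor; auto. exact (HAB HA).
Qed.

Lemma valid_impR Σ Γ Δ Δ' A B : Permutation Δ (fImp A B :: Δ') ->
  valid Σ (A :: Γ) (B :: Δ') -> valid Σ Γ Δ.
Proof.
  intros Hp IH ρ η Hok HΓ. rewrite Hp, Exists_cons.
  destruct (classic (holds ρ η A)) as [HA|HA].
  - specialize (IH ρ η Hok (Forall_cons _ HA HΓ)). rewrite Exists_cons in IH.
    unfold holds in *; simpl; tauto.
  - left. intros HA'. contradiction.
Qed.

Lemma valid_allL Σ Γ Δ σ A t : In (fAll σ A) Γ -> has_type Σ t σ ->
  valid Σ (fopen_var 0 t A :: Γ) Δ -> valid Σ Γ Δ.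
Proof.
  intros Hin Ht IH ρ η Hok HΓ. apply IH; auto. constructor; auto.
  apply (holds_open_term _ _ _ _ _ _ Ht).
  apply (proj1 (Forall_forall _ _) HΓ _ Hin), (eval_well_typed _ _ _ _ _ Hok Ht).
Qed.

Lemma valid_exR Σ Γ Δ σ A t : In (fEx σ A) Δ -> has_type Σ t σ ->
  valid Σ Γ (fopen_var 0 t A :: Δ) -> valid Σ Γ Δ.
Proof.
  intros Hin Ht IH ρ η Hok HΓ. specialize (IH ρ η Hok HΓ).
  apply Exists_cons in IH as [HA|HΔ]; auto.
  apply Exists_exists. exists (fEx σ A). split; auto.
  exists (eval ρ η [] [] t). split; [apply (eval_well_typed _ _ _ _ _ Hok Ht)|].
  exact (proj1 (holds_open_term _ _ _ _ _ _ Ht) HA).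
Qed.

Lemma Forall_perm_cons_inv {T} (P : T -> Prop) l l' x :
  Permutation l (x :: l') -> Forall P l -> P x /\ Forall P l'.
Proof. intros Hp H. rewrite Hp in H. now apply Forall_cons_iff. Qed.

Lemma valid_allR Σ Γ Δ Δ' σ A x : wfseq Σ Γ Δ -> Permutation Δ (fAll σ A :: Δ') ->
  ~ var_in x Σ -> valid (CVar x σ :: Σ) Γ (fopen_var 0 (tvar _ x) A :: Δ') -> valid Σ Γ Δ.
Proof.
  intros (_ & HwΓ & HwΔ) Hp Hx IH ρ η Hok HΓ.
  destruct (Forall_perm_cons_inv _ _ _ _ Hp HwΔ) as [HwA HwΔ'].
  rewrite Hp, Exists_cons.
  destruct (classic (exists v, has_vtype [] v σ /\ ~ sem ρ η [v] [] A))
    as [(v & Hv & HnA)|Hall].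
  - pose proof (agree_upd_var Σ ρ η x v Hx) as Hag.
    specialize (IH (upd ρ x v) η (ctx_ok_extend_var _ _ _ _ _ _ Hx Hok Hv)
      (proj1 (Forall_holds_agree _ _ _ _ _ _ HwΓ Hag) HΓ)).
    apply Exists_cons in IH as [HA|HΔ'].
    + exfalso. apply HnA, (holds_open_upd_var Σ ρ η x v A Hx (wff_supported _ _ HwA)), HA.
    + right. exact (proj2 (Exists_holds_agree _ _ _ _ _ _ HwΔ' Hag) HΔ').
  - left. intros v Hv. apply NNPP. eauto.
Qed.

Lemma valid_exL Σ Γ Γ' Δ σ A x : wfseq Σ Γ Δ -> Permutation Γ (fEx σ A :: Γ') ->
  ~ var_in x Σ -> valid (CVar x σ :: Σ) (fopen_var 0 (tvar _ x) A :: Γ') Δ -> valid Σ Γ Δ.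
Proof.
  intros (_ & HwΓ & HwΔ) Hp Hx IH ρ η Hok HΓ.
  destruct (Forall_perm_cons_inv _ _ _ _ Hp HwΓ) as [HwA HwΓ'].
  destruct (Forall_perm_cons_inv _ _ _ _ Hp HΓ) as [(v & Hv & HA) HΓ'].
  pose proof (agree_upd_var Σ ρ η x v Hx) as Hag.
  apply (Exists_holds_agree _ _ _ _ _ _ HwΔ Hag).
  apply IH; [exact (ctx_ok_extend_var _ _ _ _ _ _ Hx Hok Hv)|constructor].
  - exact (proj2 (holds_open_upd_var Σ ρ η x v A Hx (wff_supported _ _ HwA)) HA).
  - exact (proj1 (Forall_holds_agree _ _ _ _ _ _ HwΓ' Hag) HΓ').
Qed.

Lemma valid_newR Σ Γ Δ Δ' ν A a : wfseq Σ Γ Δ -> Permutation Δ (fNew ν A :: Δ') ->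
  ~ name_in a Σ -> valid (CName _ a ν :: Σ) Γ (fopen_name 0 a A :: Δ') -> valid Σ Γ Δ.
Proof.
  intros (_ & HwΓ & HwΔ) Hp Ha IH ρ η Hok HΓ.
  destruct (Forall_perm_cons_inv _ _ _ _ Hp HwΔ) as [HwA HwΔ'].
  rewrite Hp, Exists_cons.
  destruct (classic (Exists (holds ρ η) Δ')) as [HΔ'|HnΔ']; [now right|left].
  exists (ctx_supp ρ η Σ). intros n Hn.
  pose proof (agree_upd_name Σ ρ η a (VAtom (ν, n)) Ha) as Hag.
  specialize (IH ρ _ (ctx_ok_extend_name _ _ _ _ _ _ Ha Hok Hn)
    (proj1 (Forall_holds_agree _ _ _ _ _ _ HwΓ Hag) HΓ)).
  apply Exists_cons in IH as [HA|HΔ'].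
  - exact (proj1 (holds_open_upd_name Σ ρ η a _ A Ha (wff_supported _ _ HwA)) HA).
  - contradict HnΔ'. exact (proj2 (Exists_holds_agree _ _ _ _ _ _ HwΔ' Hag) HΔ').
Qed.

Lemma valid_newL Σ Γ Γ' Δ ν A a : wfseq Σ Γ Δ -> Permutation Γ (fNew ν A :: Γ') ->
  ~ name_in a Σ -> valid (CName _ a ν :: Σ) (fopen_name 0 a A :: Γ') Δ -> valid Σ Γ Δ.
Proof.
  intros (_ & HwΓ & HwΔ) Hp Ha IH ρ η Hok HΓ.
  destruct (Forall_perm_cons_inv _ _ _ _ Hp HwΓ) as [HwA HwΓ'].
  destruct (Forall_perm_cons_inv _ _ _ _ Hp HΓ) as [(l & HA) HΓ'].
  destruct (fresh_atom ν (l ++ ctx_supp ρ η Σ)) as [n Hn]; rewrite in_app_iff in Hn.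
  pose proof (agree_upd_name Σ ρ η a (VAtom (ν, n)) Ha) as Hag.
  apply (Exists_holds_agree _ _ _ _ _ _ HwΔ Hag).
  apply IH; [apply ctx_ok_extend_name; auto|constructor].
  - apply (holds_open_upd_name Σ ρ η a _ A Ha (wff_supported _ _ HwA)).
    apply HA. intros H. exact (Hn (or_introl H)).
  - exact (proj1 (Forall_holds_agree _ _ _ _ _ _ HwΓ' Hag) HΓ').
Qed.

Lemma valid_F Σ Γ Δ a ν : wfseq Σ Γ Δ -> ~ name_in a Σ ->
  valid (CName _ a ν :: Σ) Γ Δ -> valid Σ Γ Δ.
Proof.
  intros (_ & HwΓ & HwΔ) Ha IH ρ η Hok HΓ.
  destruct (fresh_atom ν (ctx_supp ρ η Σ)) as [n Hn].
  pose proof (agree_upd_name Σ ρ η a (VAtom (ν, n)) Ha) as Hag.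
  apply (Exists_holds_agree _ _ _ _ _ _ HwΔ Hag).
  apply IH; [exact (ctx_ok_extend_name _ _ _ _ _ _ Ha Hok Hn)|].
  exact (proj1 (Forall_holds_agree _ _ _ _ _ _ HwΓ Hag) HΓ).
Qed.

Lemma valid_eqR Σ Γ Δ t : valid Σ (fEq t t :: Γ) Δ -> valid Σ Γ Δ.
Proof. intros IH ρ η Hok HΓ. apply IH; auto. constructor; [reflexivity|exact HΓ]. Qed.

Lemma holds_fsubst ρ η z t u A : eval ρ η [] [] t = eval ρ η [] [] u ->
  holds ρ η (fsubst z t A) -> holds ρ η (fsubst z u A).
Proof.
  intros Etu; unfold holds; destruct A; simpl; auto;
    rewrite !(eval_subst ρ η [] [] z t u) by exact Etu; auto.
Qed.

Lemma valid_eqS Σ Γ Γ' Δ t u A z : Permutation Γ (fEq t u :: fsubst z t A :: Γ') ->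
  valid Σ (fsubst z u A :: Γ) Δ -> valid Σ Γ Δ.
Proof.
  intros Hp IH ρ η Hok HΓ. apply IH; auto. constructor; auto.
  destruct (Forall_perm_cons_inv _ _ _ _ Hp HΓ) as [Etu HΓ'].
  apply Forall_cons_iff in HΓ' as [HA _].
  exact (holds_fsubst _ _ _ _ _ _ Etu HA).
Qed.

Lemma valid_axiom Σ Γ Γ' Δ Ps Qs : ax_inst Σ Ps Qs -> Permutation Γ (Ps ++ Γ') ->
  Forall (wff Σ) Qs -> (forall Q, In Q Qs -> valid Σ (Q :: Γ) Δ) -> valid Σ Γ Δ.
Proof.
  intros Hax Hp HwQs IH ρ η Hok HΓ.
  assert (HPs : Forall (holds ρ η) Ps).
  { rewrite Hp in HΓ. now apply Forall_app in HΓ. }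
  pose proof (ax_inst_sound _ _ _ _ _ Hok Hax HwQs HPs) as HQs.
  apply Exists_exists in HQs as (Q & HQ & HQh).
  apply (IH Q HQ); auto.
Qed.

Lemma valid_A2 Σ Γ Δ a b t u : wfseq Σ Γ Δ -> In (fEq (tabs a t) (tabs b u)) Γ ->
  valid Σ (fEq a b :: fEq t u :: Γ) Δ ->
  valid Σ (fFresh a u :: fEq t (tswap a b u) :: Γ) Δ -> valid Σ Γ Δ.
Proof.
  intros (_ & HwΓ & _) Hin IH1 IH2 ρ η Hok HΓ.
  pose proof (proj1 (Forall_forall _ _) HΓ _ Hin) as E.
  pose proof (proj1 (Forall_forall _ _) HwΓ _ Hin) as Hw.
  inversion Hw as [| | |? ? ? Hat Hbu| | | | | | |]; subst.
  inversion Hat as [| | | | |? ? ? ? Ha Ht]; inversion Hbu as [| | | | |? ? ? ? Hb Hu]; subst.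
  pose proof (has_vtype_lc _ _ _ (proj1 (eval_well_typed _ _ _ _ _ Hok Ht))) as Lt.
  pose proof (has_vtype_lc _ _ _ (proj1 (eval_well_typed _ _ _ _ _ Hok Hu))) as Lu.
  destruct (eval_name _ _ _ _ _ Hok Ha) as (c & Ec & _).
  destruct (eval_name _ _ _ _ _ Hok Hb) as (d & Ed & _).
  unfold holds in E; simpl in E; rewrite Ec, Ed in E; injection E as E.
  destruct (close_value_inj _ _ _ _ _ Lt Lu E) as [Etu [<-|Hc]].
  - apply IH1; auto. unfold holds; repeat constructor; auto; simpl; [congruence|].
    now rewrite Etu, swap_value_id.
  - apply IH2; auto. unfold holds; repeat constructor; auto; simpl.
    + now exists c.
    + now rewrite Ec, Ed.
Qed.

Lemma eval_agree Σ ρ η ρ' η' t τ : has_type Σ t τ -> agree Σ ρ η ρ' η' ->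
  eval ρ η [] [] t = eval ρ' η' [] [] t.
Proof.
  intros Ht [Hρ Hη]. destruct (has_type_fv _ _ _ Ht) as [Hv Hn]. apply eval_ext; auto.
Qed.

(** The fresh variables [a] and [x] of rule A3 denote a fresh atom and the body of the
    abstraction denoted by [t], opened at that atom. *)
Lemma valid_A3 Σ Γ Δ t ν σ a x : wfseq Σ Γ Δ -> has_type Σ t (TAbs ν σ) ->
  ~ var_in a Σ -> ~ var_in x Σ -> a <> x ->
  valid (CVar x σ :: CVar a (TName _ ν) :: Σ) (fEq t (tabs (tvar _ a) (tvar _ x)) :: Γ) Δ ->
  valid Σ Γ Δ.
Proof.
  intros (_ & HwΓ & HwΔ) Ht Ha Hx Hax IH ρ η Hok HΓ.
  pose proof (proj1 (eval_well_typed _ _ _ _ _ Hok Ht)) as Vt.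
  destruct (eval ρ η [] [] t) as [| | |w] eqn:Et; simpl in Vt; try contradiction.
  destruct (fresh_atom ν (supp w)) as [n Hn].
  set (ρ' := upd (upd ρ a (VAtom (ν, n))) x (open_value 0 (ν, n) w)).
  assert (Hag : agree Σ ρ η ρ' η).
  { split; intros y Hy; [|reflexivity]. unfold ρ'.
    rewrite !upd_neq; auto; intros ->; contradiction. }
  apply (Exists_holds_agree _ _ _ _ _ _ HwΔ Hag).
  apply IH; [|constructor].
  - apply ctx_ok_extend_var; [intros [τ [E|H]]; [congruence|apply Hx; now exists τ]| |].
    + apply ctx_ok_extend_var; auto. reflexivity.
    + exact (has_vtype_open [] w σ (ν, n) Vt).
  - unfold holds; simpl. unfold ρ' at 2 3. rewrite upd_eq, upd_neq, upd_eq by auto.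
    rewrite <- (eval_agree _ _ _ _ _ _ _ Ht Hag), Et. simpl.
    now rewrite close_open_value.
  - exact (proj1 (Forall_holds_agree _ _ _ _ _ _ HwΓ Hag) HΓ).
Qed.

Lemma valid_ctx Σ Γ Δ a t : ctx_fresh Σ (fFresh (tname _ a) t) ->
  valid Σ (fFresh (tname _ a) t :: Γ) Δ -> valid Σ Γ Δ.
Proof. intros Hc IH ρ η Hok HΓ. apply IH; auto. constructor; eauto using ctx_fresh_holds. Qed.

Lemma NL_wfseq (Σ : ctx sg) Γ Δ : NL Σ Γ Δ -> wfseq Σ Γ Δ.
Proof. destruct 1; assumption. Qed.

Theorem NL_sound Σ Γ Δ : NL Σ Γ Δ -> valid Σ Γ Δ.
Proof.
  induction 1.
  all: try solve [eauto using valid_init, valid_topR, valid_botL, valid_andL, valid_andR,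
    valid_orL, valid_orR, valid_impL, valid_impR, valid_allL, valid_exR, valid_allR,
    valid_exL, valid_newR, valid_newL, valid_eqR, valid_eqS, valid_A2, valid_A3, valid_F,
    valid_ctx].
  match goal with Hd : forall Q, In Q ?Qs -> NL _ (Q :: _) _ |- _ =>
    eapply valid_axiom; eauto; apply Forall_forall; intros Q HQ;
    destruct (NL_wfseq _ _ _ (Hd Q HQ)) as (_ & HwQ & _); now inversion HwQ
  end.
Qed.

End Model.

Theorem mainTheorem2 (sg : signature) : ~ @NL sg [] [] [@fBot sg].
Proof.
  intros H.
  pose proof (NL_sound sg _ _ _ H (fun _ => VData) (fun _ => VData) I (Forall_nil _)) as Hbot.
  apply Exists_cons in Hbot as [Hbot|Hnil].
  - exact Hbot.
  - inversion Hnil.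
Qed.
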